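(* Let $R$ be a discrete valuation ring with residue field $k$ and fraction field $K$. Let $\widetilde{\mathfrak v}=(\widetilde V_i,\tilde v_i,\tilde v^i)_{i\in\mathbb Z}$ be a smoothing over $R$ of a colinked chain $\mathfrak v=(V_i,v_i,v^i)_{i\in\mathbb Z}$ with finite cosupport, and let $\mathfrak w=(W_i)_{i\in\mathbb Z}$ be an exact subrepresentation of $\mathfrak v$ of pure dimension $1$. Then there is a subrepresentation $\widetilde{\mathfrak w}\subseteq\widetilde{\mathfrak v}$ specializing to $\mathfrak w$, i.e. there are submodules $\widetilde W_i\subseteq\widetilde V_i$, each generated by an element $x_i$ whose residue in $V_i$ generates $W_i$, such that $\tilde v^i(\widetilde W_i)\subseteq\widetilde W_{i+1}$ and $\tilde v_i(\widetilde W_{i+1})\subseteq\widetilde W_i$ for all $i\in\mathbb Z$.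
   Context: $\mathcal Z$ is the quiver with vertex set $\mathbb Z$ and arrows $\alpha^i\colon i\to i+1$, $\alpha_i\colon i+1\to i$ ($i\in\mathbb Z$). A representation $(V_i,v_i,v^i)$ of $\mathcal Z$ in a category consists of objects $V_i$ and morphisms $v^i\colon V_i\to V_{i+1}$, $v_i\colon V_{i+1}\to V_i$. Over $k$ (finite-dimensional vector spaces), compositions $v^i_j$ are $v^{j-1}\circ\cdots\circ v^i$ ($j>i$), $v_j\circ\cdots\circ v_{i-1}$ ($j<i$), identity ($j=i$). A colinked chain satisfies $v_iv^i=0$, $v^iv_i=0$ and $\mathrm{Im}(v_i)+\mathrm{Im}(v^{i-1})=V_i$ for all $i$. A finite cosupport is a finite $H\subseteq\mathbb Z$ such that for each $i$ there is $j\in H$ with $v^i_j$ injective. A subrepresentation $\mathfrak w$ is a family of subspaces $W_i\subseteq V_i$ with $v^i(W_i)\subseteq W_{i+1}$, $v_i(W_{i+1})\subseteq W_i$; it has pure dimension $1$ if all $W_i$ are one-dimensional, and is exact if the restricted maps $w^i,w_i$ satisfy $\ker(w^i)=\mathrm{Im}(w_i)$, $\ker(w_i)=\mathrm{Im}(w^i)$ for all $i$. A representation of $\mathcal Z$ over a field is general if $v_i\circ v^i$ and $v^i\circ v_i$ are nonzero scalar multiples of the identity for every $i$. If $\widetilde{\mathfrak v}$ is a representation of $\mathcal Z$ in free $R$-modules of finite rank, its specialization is $\widetilde{\mathfrak v}\otimes_R k$; $\widetilde{\mathfrak v}$ is a smoothing of $\mathfrak v$ over $R$ if $\widetilde{\mathfrak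 v}\otimes_R k=\mathfrak v$ and $\widetilde{\mathfrak v}\otimes_R K$ is general. *)

From HB Require Import structures.
From mathcomp Require Import all_boot all_order all_algebra.
Set Implicit Arguments. Unset Strict Implicit. Unset Printing Implicit Defensive.
Import Order.TTheory GRing.Theory Num.Theory.
Local Open Scope ring_scope.

(* Conventions: V_i = 'rV[F]_(n i) (row vectors); a linear map V_i -> V_j is a
   matrix A acting on the right (x |-> x *m A).
   vu i : V_i -> V_(i+1)  is  v^i ,   vl i : V_(i+1) -> V_i  is  v_i. *)

Section Chains.
Variables (F : fieldType) (n : int -> nat).
Variables (vu : forall i : int, 'M[F]_(n i, n (i + 1)))
          (vl : forall i : int, 'M[F]_(n (i + 1), n i)).

(* colinked chain: v_i v^i = 0, v^i v_i = 0, Im v_i + Im v^(i-1) = V_i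
   (the last condition is stated at index i+1, for all i : int) *)
Definition colinked : Prop :=
  forall i : int,
    [/\ vu i *m vl i = 0, vl i *m vu i = 0
      & ((vl (i + 1)%R + vu i)%MS == 1%:M)%MS].

Definition chain_state := {i : int & 'rV[F]_(n i)}.

Definition fstep (s : chain_state) : chain_state :=
  Tagged (fun i => 'rV[F]_(n i)) (tagged s *m vu (tag s)).

Definition bcast (i : int) (x : 'rV[F]_(n i)) : 'rV[F]_(n (i - 1 + 1)) :=
  castmx (erefl 1%N, congr1 n (esym (subrK 1 i))) x.

Definition bstep (s : chain_state) : chain_state :=
  Tagged (fun i => 'rV[F]_(n i)) (bcast (tagged s) *m vl (tag s - 1)).

(* image of x : V_i under the composite v^i_j : V_i -> V_j *)
Definition comp_at (i j : int) (x : 'rV[F]_(n i)) : chain_state :=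
  if i <= j then iter (absz (j - i)) fstep (Tagged (fun i => 'rV[F]_(n i)) x)
  else iter (absz (j - i)) bstep (Tagged (fun i => 'rV[F]_(n i)) x).

Arguments comp_at : clear implicits.

Definition comp_injective (i j : int) : Prop :=
  forall x : 'rV[F]_(n i), x != 0 -> tagged (comp_at i j x) != 0.

Definition finite_cosupport (H : seq int) : Prop :=
  forall i : int, exists2 j, j \in H & comp_injective i j.

Definition general_rep : Prop :=
  forall i : int,
    (exists2 c : F, c != 0 & vu i *m vl i = c%:M) /\
    (exists2 d : F, d != 0 & vl i *m vu i = d%:M).

(* subrepresentation: W_i is the row space of W i *)
Definition subrep (W : forall i : int, 'M[F]_(n i)) : Prop :=
  forall i : int, (W i *m vu i <= W (i + 1)%R)%MS /\ (W (i + 1)%R *m vl i <= W i)%MS.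

Definition pure_dim1 (W : forall i : int, 'M[F]_(n i)) : Prop :=
  forall i : int, \rank (W i) = 1%N.

Definition exact_subrep (W : forall i : int, 'M[F]_(n i)) : Prop :=
  forall i : int,
    ((W i :&: kermx (vu i)) == W (i + 1)%R *m vl i)%MS /\
    ((W (i + 1)%R :&: kermx (vl i)) == W i *m vu i)%MS.

End Chains.

Definition is_DVR (R : idomainType) : Prop :=
  exists pi : R, [/\ pi != 0, pi \isn't a GRing.unit &
    forall a : R, a != 0 -> exists (u : R) (m : nat),
      u \is a GRing.unit /\ a = u * pi ^+ m].

(* red : R -> k is the residue map: surjective with kernel the maximal ideal
   (= the non-units of the local ring R) *)
Definition residue_map (R : idomainType) (k : fieldType)
  (red : {rmorphism R -> k}) : Prop :=
  (forall y : k, exists a : R, red a = y) /\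
  (forall a : R, (red a == 0) = (a \isn't a GRing.unit)).

Definition fraction_map (R : idomainType) (K : fieldType)
  (iota : {rmorphism R -> K}) : Prop :=
  injective iota /\
  (forall z : K, exists a b : R, b != 0 /\ z = iota a / iota b).

Definition smoothing (R : idomainType) (k K : fieldType)
  (red : {rmorphism R -> k}) (iota : {rmorphism R -> K}) (n : int -> nat)
  (Vu : forall i : int, 'M[R]_(n i, n (i + 1)))
  (Vl : forall i : int, 'M[R]_(n (i + 1), n i))
  (vu : forall i : int, 'M[k]_(n i, n (i + 1)))
  (vl : forall i : int, 'M[k]_(n (i + 1), n i)) : Prop :=
  (forall i : int, map_mx red (Vu i) = vu i /\ map_mx red (Vl i) = vl i) /\
  general_rep (fun i => map_mx iota (Vu i)) (fun i => map_mx iota (Vl i)).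

From HB Require Import structures.
From mathcomp Require Import all_boot all_order all_algebra zify.
From Stdlib Require Import ClassicalEpsilon.
Set Implicit Arguments. Unset Strict Implicit. Unset Printing Implicit Defensive.
Import Order.TTheory GRing.Theory Num.Theory.
Local Open Scope ring_scope.

(* A lift of W is built edge by edge. Call the edge i forward when W_i is not
   killed by v^i; on a backward edge exactness gives W_i = v_i(W_(i+1)). It is
   enough to impose x_(i+1) = x_i Vu_i on forward and x_i = x_(i+1) Vl_i on
   backward edges, because Vu_i Vl_i and Vl_i Vu_i are nonzero scalars.
   On a finite window the edges are treated from left to right. At a backward
   edge the vector already chosen at i is only congruent mod pi to a vector in
   the image of Vl_i; the error is absorbed by subtracting pi times a family
   satisfying all earlier edge relations, which exists by Nakayama's lemma
   since Im v_i + Im v^(i-1) = V_i.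
   Outside a window containing the cosupport, v^i is injective on the left and
   v_i on the right. All V_i having the same dimension, these maps are
   invertible mod pi, so the lifts extend uniquely outward, and the extensions
   of growing radius glue to a family indexed by all of Z. *)

Section FieldMatrices.
Variable F : fieldType.

Lemma eqmx_rank1 m1 m2 p (X : 'M[F]_(m1, p)) (Y : 'M[F]_(m2, p)) :
  (X <= Y)%MS -> \rank Y = 1%N -> X != 0 -> (X == Y)%MS.
Proof.
move=> sXY rY X0; rewrite /eqmx sXY /= -(mxrank_leqif_sup sXY).2 rY.
by rewrite eqn_leq -{1}rY mxrankS //= lt0n mxrank_eq0.
Qed.

Lemma scalar_mul_leq_dim m p (A : 'M[F]_(m, p)) (B : 'M[F]_(p, m)) (c : F) :
  c != 0 -> A *m B = c%:M -> (m <= p)%N.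
Proof.
move=> c0 AB; have <- : \rank (c%:M : 'M[F]_m) = m.
  by apply: mxrank_unit; rewrite unitmxE det_scalar unitfE expf_neq0.
by rewrite -AB (leq_trans (mxrankM_maxl _ _)) ?rank_leq_col.
Qed.

Lemma general_rep_dim (n : int -> nat) (vu : forall i : int, 'M[F]_(n i, n (i + 1)))
    (vl : forall i : int, 'M[F]_(n (i + 1), n i)) :
  general_rep vu vl -> forall i, n (i + 1) = n i.
Proof.
move=> gen i; have [[c c0 /(scalar_mul_leq_dim c0) le1] [d d0 /(scalar_mul_leq_dim d0) le2]] := gen i.
by apply/eqP; rewrite eqn_leq le1 le2.
Qed.

End FieldMatrices.

Lemma scalar_mul_cancel (R : idomainType) m p (A : 'M[R]_(m, p)) (B : 'M[R]_(p, m)) (a : R) :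
  a != 0 -> A *m B = a%:M -> forall x y : 'rV[R]_m, x *m A = y *m A -> x = y.
Proof.
move=> a0 AB x y xy; have /eqP : a *: (x - y) = 0.
  by rewrite -mul_mx_scalar -AB mulmxA mulmxBl xy subrr mul0mx.
by rewrite scalemx_eq0 (negbTE a0) subr_eq0 => /eqP.
Qed.

Lemma map_mx_scalar_inj (R : idomainType) (K : fieldType) (iota : {rmorphism R -> K}) :
  injective iota -> forall m (M : 'M[R]_m) (c : K),
  c != 0 -> map_mx iota M = c%:M -> exists2 a, a != 0 & M = a%:M.
Proof.
move=> iota_inj [|m] M c c0 iM.
  by exists 1; [exact: oner_neq0 | apply/matrixP => [[]]].
have iM00 : iota (M 0 0) = c by move/matrixP: iM => /(_ 0 0); rewrite !mxE eqxx.
exists (M 0 0); first by apply: contra_neq c0 => M0; rewrite -iM00 M0 rmorph0.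
apply/matrixP => i j; apply: iota_inj; move/matrixP: iM => /(_ i j).
by rewrite !mxE -iM00 => ->; rewrite rmorphMn.
Qed.

Lemma general_rep_scalar (R : idomainType) (K : fieldType) (iota : {rmorphism R -> K})
    (n : int -> nat) (Vu : forall i : int, 'M[R]_(n i, n (i + 1)))
    (Vl : forall i : int, 'M[R]_(n (i + 1), n i)) :
  injective iota ->
  general_rep (fun i => map_mx iota (Vu i)) (fun i => map_mx iota (Vl i)) ->
  forall i, (exists2 a, a != 0 & Vu i *m Vl i = a%:M) /\
            (exists2 b, b != 0 & Vl i *m Vu i = b%:M).
Proof.
move=> iota_inj gen i; have [[c c0 ec] [d d0 ed]] := gen i.
split; [apply: (map_mx_scalar_inj iota_inj c0) | apply: (map_mx_scalar_inj iota_inj d0)].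
  by rewrite map_mxM.
by rewrite map_mxM.
Qed.

Lemma DVR_maximal_ideal (R : idomainType) (k : fieldType) (red : {rmorphism R -> k}) :
  is_DVR R -> residue_map red ->
  exists pi, red pi = 0 /\ forall a, red a = 0 -> exists c, a = pi * c.
Proof.
move=> [pi [_ pi_nunit dvr]] [_ red_eq0]; exists pi; split; first by apply/eqP; rewrite red_eq0.
move=> a ra0; have [->|a0] := eqVneq a 0; first by exists 0; rewrite mulr0.
have [u [[|m] [u_unit ea]]] := dvr a a0.
  by move/eqP: ra0; rewrite red_eq0 ea expr0 mulr1 u_unit.
by exists (u * pi ^+ m); rewrite ea exprS mulrCA.
Qed.

Lemma glue_families (T : int -> Type) (P : nat -> (forall i, T i) -> Prop) :
  (forall d, exists f, P d f) ->
  (forall d1 d2 f1 f2 i, P d1 f1 -> P d2 f2 -> (`|i| <= minn d1 d2)%N -> f1 i = f2 i) ->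
  exists f : forall i, T i, forall d g i, P d g -> (`|i| <= d)%N -> f i = g i.
Proof.
move=> Pex Pagree; pose F d := proj1_sig (constructive_indefinite_description _ (Pex d)).
have FP d : P d (F d) := proj2_sig (constructive_indefinite_description _ (Pex d)).
exists (fun i => F `|i|%N i) => d g i Pg le_id.
by apply: Pagree (FP _) Pg _; rewrite leq_min leqnn.
Qed.

Section ResidueMatrices.
Variables (R : idomainType) (k : fieldType) (red : {rmorphism R -> k}) (pi : R).
Hypothesis red_surj : forall y : k, exists a : R, red a = y.
Hypothesis red_eq0 : forall a : R, (red a == 0) = (a \isn't a GRing.unit).
Hypothesis red_pi : red pi = 0.
Hypothesis red_eq0_dvd : forall a : R, red a = 0 -> exists c, a = pi * c.

Lemma map_red_mx_surj m p (v : 'M[k]_(m, p)) : exists w : 'M[R]_(m, p), map_mx red w = v.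
Proof.
have /fin_all_exists [f fP] : forall ij : 'I_m * 'I_p, exists a, red a = v ij.1 ij.2.
  by move=> ij; exact: red_surj.
by exists (\matrix_(i, j) f (i, j)); apply/matrixP => i j; rewrite !mxE (fP (i, j)).
Qed.

Lemma map_red_mx_eq0 m p (v : 'M[R]_(m, p)) : map_mx red v = 0 -> exists w, v = pi *: w.
Proof.
move/matrixP=> v0.
have /fin_all_exists [f fP] : forall ij : 'I_m * 'I_p, exists c, v ij.1 ij.2 = pi * c.
  by move=> [i j]; apply: red_eq0_dvd; have := v0 i j; rewrite !mxE.
by exists (\matrix_(i, j) f (i, j)); apply/matrixP => i j; rewrite !mxE (fP (i, j)).
Qed.

Lemma map_red_mx_pi m p (v : 'M[R]_(m, p)) : map_mx red (pi *: v) = 0.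
Proof. by rewrite map_mxZ red_pi scale0r. Qed.

Lemma map_red_unitmx m (X : 'M[R]_m) : map_mx red X \in unitmx -> X \in unitmx.
Proof. by rewrite !unitmxE det_map_mx unitfE red_eq0 negbK. Qed.

Lemma nakayama_rV m (P : 'rV[R]_m -> Prop) :
  P 0 -> (forall x y, P x -> P y -> P (x + y)) -> (forall c x, P x -> P (c *: x)) ->
  (forall z, exists2 x, P x & exists y, z = x + pi *: y) -> forall z, P z.
Proof.
move=> P0 PD PZ Pmod z.
have /fin_all_exists [XY XYP] : forall j : 'I_m,
    exists xy : 'rV_m * 'rV_m, P xy.1 /\ delta_mx 0 j = xy.1 + pi *: xy.2.
  by move=> j; have [x Px [y e]] := Pmod (delta_mx 0 j); exists (x, y).
pose X := \matrix_j (XY j).1; pose Y := \matrix_j (XY j).2.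
have X_Y : 1%:M = X + pi *: Y.
  apply/matrixP => i j; have [_ /matrixP /(_ 0 j)] := XYP i.
  by rewrite !mxE eqxx /= eq_sym.
have X_unit : X \in unitmx.
  by apply: map_red_unitmx; rewrite -[X](addrK (pi *: Y)) -X_Y map_mxB map_red_mx_pi
    subr0 map_scalar_mx rmorph1 unitmx1.
rewrite -[z](mulmxKV X_unit) mulmx_sum_row.
by apply: (big_ind P) => // i _; apply: PZ; rewrite rowK; case: (XYP i).
Qed.

Lemma map_red_row_full_surj m p (M : 'M[R]_(m, p)) :
  row_full (map_mx red M) -> forall y : 'rV_p, exists x, y = x *m M.
Proof.
move=> Mfull; apply: (nakayama_rV (P := fun y => exists x, y = x *m M)).
- by exists 0; rewrite mul0mx.
- by move=> _ _ [x1 ->] [x2 ->]; exists (x1 + x2); rewrite mulmxDl.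
- by move=> c _ [x ->]; exists (c *: x); rewrite scalemxAl.
move=> z; have /submxP [D eD] := submx_full (map_mx red z) Mfull.
have [x xD] := map_red_mx_surj D.
have [w ew] : exists w, z - x *m M = pi *: w.
  by apply: map_red_mx_eq0; rewrite map_mxB map_mxM xD eD subrr.
by exists (x *m M); [exists x | exists w; rewrite -ew subrKC].
Qed.

Lemma map_red_lift_preimage m p (M : 'M[R]_(m, p)) (U : 'M[k]_m) (V : 'M[k]_p) :
  row_free (map_mx red M) -> (p <= m)%N ->
  (U *m map_mx red M <= V)%MS -> \rank V = 1%N -> U != 0 ->
  forall y : 'rV_p, (map_mx red y == V)%MS -> exists2 x, x *m M = y & (map_mx red x == U)%MS.
Proof.
move=> Mfree le_pm UMV rV U0 y /eqmxP yV.
have Mfull : row_full (map_mx red M).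
  move/eqnP: Mfree => rM; apply/eqnP/anti_leq.
  by rewrite rank_leq_col /= rM.
have [x exM] := map_red_row_full_surj Mfull y; exists x => //; apply/eqmxP.
have UM0 : U *m map_mx red M != 0 by rewrite mulmx_free_eq0.
apply: (eqmxMfree Mfree); rewrite -map_mxM -exM.
exact: eqmx_trans yV (eqmx_sym (eqmxP (eqmx_rank1 UMV rV UM0))).
Qed.

Section Lifting.
Variables (n : int -> nat)
  (Vu : forall i : int, 'M[R]_(n i, n (i + 1))) (Vl : forall i : int, 'M[R]_(n (i + 1), n i))
  (vu : forall i : int, 'M[k]_(n i, n (i + 1))) (vl : forall i : int, 'M[k]_(n (i + 1), n i))
  (W : forall i : int, 'M[k]_(n i)).
Hypothesis red_Vu : forall i, map_mx red (Vu i) = vu i.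
Hypothesis red_Vl : forall i, map_mx red (Vl i) = vl i.
Hypothesis Vu_Vl_scalar : forall i, exists2 a, a != 0 & Vu i *m Vl i = a%:M.
Hypothesis Vl_Vu_scalar : forall i, exists2 b, b != 0 & Vl i *m Vu i = b%:M.
Hypothesis v_colinked : colinked vu vl.
Hypothesis W_subrep : subrep vu vl W.
Hypothesis W_dim1 : pure_dim1 W.
Hypothesis W_exact : exact_subrep vu vl W.

Local Notation family := (forall i : int, 'rV[R]_(n i)).

Definition forward i := W i *m vu i != 0.

Definition edge_lifted (f : family) i : Prop :=
  if forward i then f (i + 1) = f i *m Vu i else f i = f (i + 1) *m Vl i.

Definition lifted_on p q (f : family) := forall i, p <= i < q -> edge_lifted f i.

Definition lifts_W i (v : 'rV[R]_(n i)) := (map_mx red v == W i)%MS.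

Definition lifts_on p q (f : family) := forall i, p <= i <= q -> lifts_W (f i).

Lemma related_mulmx_scalar i (x : 'rV[R]_(n i)) (y : 'rV[R]_(n (i + 1))) :
  y = x *m Vu i \/ x = y *m Vl i ->
  (exists r, x *m Vu i = r *: y) /\ (exists r, y *m Vl i = r *: x).
Proof.
have [a _ UL] := Vu_Vl_scalar i; have [b _ LU] := Vl_Vu_scalar i.
case=> ->; split.
- by exists 1; rewrite scale1r.
- by exists a; rewrite -mulmxA UL mul_mx_scalar.
- by exists b; rewrite -mulmxA LU mul_mx_scalar.
- by exists 1; rewrite scale1r.
Qed.

Lemma edge_lifted_related f i :
  edge_lifted f i -> f (i + 1) = f i *m Vu i \/ f i = f (i + 1) *m Vl i.
Proof. by rewrite /edge_lifted; case: forward; [left | right]. Qed.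

Lemma lifted_on0 p q : lifted_on p q (fun=> 0).
Proof. by move=> i _; rewrite /edge_lifted; case: forward; rewrite mul0mx. Qed.

Lemma lifted_onD p q f g :
  lifted_on p q f -> lifted_on p q g -> lifted_on p q (fun i => f i + g i).
Proof.
move=> lf lg i piq; have := lf i piq; have := lg i piq.
by rewrite /edge_lifted; case: forward => -> ->; rewrite mulmxDl.
Qed.

Lemma lifted_onZ p q c f : lifted_on p q f -> lifted_on p q (fun i => c *: f i).
Proof.
move=> lf i piq; have := lf i piq.
by rewrite /edge_lifted; case: forward => ->; rewrite scalemxAl.
Qed.

Lemma eq_lifted_on p q f g :
  (forall i, p <= i <= q -> f i = g i) -> lifted_on p q f -> lifted_on p q g.
Proof. by move=> fg lf i piq; have := lf i piq; rewrite /edge_lifted !fg //; lia. Qed.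

Lemma lifted_on_snoc p q f (x : 'rV[R]_(n (q + 1))) :
  p <= q -> lifted_on p q f -> edge_lifted (dfwith f x) q ->
  lifted_on p (q + 1) (dfwith f x).
Proof.
move=> le_pq lf lq i piq; have [lt_iq | le_qi] := ltP i q; last by rewrite (_ : i = q) //; lia.
apply: (eq_lifted_on _ lf); last by lia.
by move=> j pjq; rewrite dfwith_out //; apply/eqP; lia.
Qed.

Lemma lifts_on_snoc p q f (x : 'rV[R]_(n (q + 1))) :
  p <= q -> lifts_on p q f -> lifts_W x -> lifts_on p (q + 1) (dfwith f x).
Proof.
move=> le_pq Wf Wx i piq; have [<- | ne] := eqVneq (q + 1) i; first by rewrite dfwith_in.
by rewrite dfwith_out //; apply: Wf; move/eqP: ne; lia.
Qed.

Lemma lifts_W_neq0 i (v : 'rV[R]_(n i)) : lifts_W v -> map_mx red v != 0.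
Proof. by move=> /eqmx_rank; rewrite W_dim1 -mxrank_eq0 => ->. Qed.

Lemma lifted_on_extend_Vu p q tau : p <= q -> lifted_on p q tau ->
  exists2 tau', lifted_on p (q + 1) tau' & tau' (q + 1) = tau q *m Vu q.
Proof.
move=> le_pq ltau; have [a _ UL] := Vu_Vl_scalar q.
(* On a backward edge the relation at q reads c *: tau q = (tau q *m Vu q) *m Vl q. *)
pose c := if forward q then 1 else a.
exists (dfwith (fun i => c *: tau i) (tau q *m Vu q)); last exact: dfwith_in.
apply: lifted_on_snoc => //; first exact: lifted_onZ.
rewrite /edge_lifted dfwith_in dfwith_out; last by apply/eqP; lia.
by rewrite /c; case: forward; rewrite ?scale1r // -mulmxA UL mul_mx_scalar.
Qed.

Lemma lifted_on_add_Vl p q : p <= q -> forall z : 'rV[R]_(n q),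
  exists tau s, lifted_on p q tau /\ z = tau q + s *m Vl q.
Proof.
move=> le_pq; have [d {le_pq}->] : exists d : nat, q = p + d%:Z by exists `|q - p|%N; lia.
elim: d => [|d IH] z.
  exists (dfwith (fun i => 0 : 'rV[R]_(n i)) z), 0.
  by split; [move=> i; lia | rewrite dfwith_in mul0mx (addr0 z)].
move: z; rewrite (_ : p + d.+1%:Z = p + d%:Z + 1); last by lia.
clear q; set q := p + d%:Z.
apply: (nakayama_rV (P := fun z =>
  exists tau s, lifted_on p (q + 1) tau /\ z = tau (q + 1) + s *m Vl (q + 1))).
- by exists (fun=> 0), 0; split; [exact: lifted_on0 | rewrite mul0mx addr0].
- move=> _ _ [t1 [s1 [l1 ->]]] [t2 [s2 [l2 ->]]].
  exists (fun i => t1 i + t2 i), (s1 + s2); split; first exact: lifted_onD.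
  by rewrite mulmxDl addrACA.
- move=> c _ [t [s [l ->]]]; exists (fun i => c *: t i), (c *: s).
  by split; [exact: lifted_onZ | rewrite scalerDr scalemxAl].
move=> z; have [_ LU0 span] := v_colinked q.
have /sub_addsmxP [[u1 u2] /= ez] : (map_mx red z <= vl (q + 1) + vu q)%MS.
  by rewrite (eqmxP span) submx1.
have [v ev] := map_red_mx_surj u1; have [u eu] := map_red_mx_surj u2.
have [tau [s [ltau eu']]] := IH u.
have le_pq : p <= q by rewrite /q; lia.
have [tau' ltau' etau'] := lifted_on_extend_Vu le_pq ltau.
exists (tau' (q + 1) + v *m Vl (q + 1)); first by exists tau', v.
have [y ey] : exists y, z - (tau' (q + 1) + v *m Vl (q + 1)) = pi *: y.
  apply: map_red_mx_eq0; rewrite etau' (_ : tau q = u - s *m Vl q); last by rewrite eu' addrK.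
  rewrite map_mxB map_mxD !map_mxM map_mxB map_mxM !red_Vl red_Vu eu ev.
  by rewrite mulmxBl -mulmxA LU0 mulmx0 subr0 ez [X in _ - X]addrC subrr.
by exists y; rewrite -ey subrKC.
Qed.

Lemma lifted_window_step p q g : p <= q -> lifts_on p q g -> lifted_on p q g ->
  exists g', lifts_on p (q + 1) g' /\ lifted_on p (q + 1) g'.
Proof.
move=> le_pq Wg lg; have Wgq : lifts_W (g q) by apply: Wg; lia.
have qq1 : q + 1 != q by apply/eqP; lia.
case fwd: (forward q).
  exists (dfwith g (g q *m Vu q)); split.
    apply: lifts_on_snoc => //; rewrite /lifts_W map_mxM red_Vu.
    apply/eqmxP; apply: eqmx_trans (eqmxMr _ (eqmxP Wgq)) _; apply/eqmxP.
    exact: eqmx_rank1 (W_subrep q).1 (W_dim1 _) fwd.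
  by apply: lifted_on_snoc; rewrite // /edge_lifted fwd dfwith_in dfwith_out.
have WqVl : (W q <= W (q + 1) *m vl q)%MS.
  have [/eqmxP <- _] := W_exact q.
  by rewrite sub_capmx submx_refl sub_kermx; apply: negbFE.
have /submxP [D eD] : (map_mx red (g q) <= W (q + 1) *m vl q)%MS by rewrite (eqmxP Wgq).
set u := D *m W (q + 1); have [h eh] := map_red_mx_surj u.
have [z ez] : exists z, g q - h *m Vl q = pi *: z.
  by apply: map_red_mx_eq0; rewrite map_mxB map_mxM eh red_Vl eD mulmxA subrr.
have [tau [s [ltau etau]]] := lifted_on_add_Vl le_pq z.
pose g' i := g i + (- pi) *: tau i.
exists (dfwith g' (h + pi *: s)); split.
  apply: lifts_on_snoc => // [i piq|].
    by rewrite /lifts_W /g' map_mxD map_mxZ rmorphN red_pi oppr0 scale0r addr0; apply: Wg.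
  rewrite /lifts_W map_mxD map_red_mx_pi addr0 eh.
  apply: eqmx_rank1 (submxMl _ _) (W_dim1 _) _.
  by apply: contraNneq (lifts_W_neq0 Wgq) => u0; rewrite eD mulmxA u0 mul0mx.
apply: lifted_on_snoc => //; first exact: (lifted_onD lg (lifted_onZ _ ltau)).
rewrite /edge_lifted fwd dfwith_in dfwith_out // /g'.
have -> : g q = h *m Vl q + pi *: z by rewrite -ez subrKC.
by rewrite etau scalerDr scaleNr mulmxDl -scalemxAl [pi *: tau q + _]addrC addrA addrK.
Qed.

Lemma lifted_window p q : p <= q -> exists g, lifts_on p q g /\ lifted_on p q g.
Proof.
move=> le_pq; have [d {le_pq}->] : exists d : nat, q = p + d%:Z by exists `|q - p|%N; lia.
elim: d => [|d [g [Wg lg]]].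
  have [h eh] := map_red_mx_surj (nz_row (W p)).
  exists (dfwith (fun i => 0 : 'rV[R]_(n i)) h); split; last by move=> i; lia.
  move=> i pip; rewrite (_ : i = p); last by lia.
  rewrite /lifts_W dfwith_in eh; apply: eqmx_rank1 (nz_row_sub _) (W_dim1 _) _.
  by rewrite nz_row_eq0 -mxrank_eq0 W_dim1.
rewrite (_ : p + d.+1%:Z = p + d%:Z + 1); last by lia.
by apply: lifted_window_step Wg lg; lia.
Qed.

Section Extension.
Variable S : nat.
Hypothesis n_succ : forall i, n (i + 1) = n i.
Hypothesis vu_free : forall i, i < - S%:Z -> row_free (vu i).
Hypothesis vl_free : forall i, S%:Z <= i -> row_free (vl i).
Variable g : family.
Hypothesis W_g : lifts_on (- S%:Z) S%:Z g.
Hypothesis lifted_g : lifted_on (- S%:Z) S%:Z g.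

Definition extends d (f : family) : Prop :=
  [/\ forall i, - S%:Z <= i <= S%:Z -> f i = g i,
      forall i, - (S + d)%:Z <= i < - S%:Z -> f (i + 1) = f i *m Vu i,
      forall i, S%:Z <= i < (S + d)%:Z -> f i = f (i + 1) *m Vl i &
      lifts_on (- (S + d)%:Z) (S + d)%:Z f].

Lemma lift_Vu_preimage i (y : 'rV[R]_(n (i + 1))) : i < - S%:Z -> lifts_W y ->
  exists2 x, x *m Vu i = y & lifts_W x.
Proof.
move=> /vu_free free; apply: map_red_lift_preimage; rewrite ?red_Vu ?n_succ //.
- exact: (W_subrep i).1.
- by rewrite -mxrank_eq0 W_dim1.
Qed.

Lemma lift_Vl_preimage i (y : 'rV[R]_(n i)) : S%:Z <= i -> lifts_W y ->
  exists2 x : 'rV[R]_(n (i + 1)), x *m Vl i = y & lifts_W x.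
Proof.
move=> /vl_free free; apply: map_red_lift_preimage; rewrite ?red_Vl ?n_succ //.
- exact: (W_subrep i).2.
- by rewrite -mxrank_eq0 W_dim1.
Qed.

Lemma extends_exists d : exists f, extends d f.
Proof.
elim: d => [|d [f [fg fl fr fW]]].
  by exists g; split => // [i|i|]; rewrite ?addn0 //; lia.
have [l el] : exists l, l = - (S + d)%:Z - 1 by eexists.
have [r er] : exists r, r = (S + d)%:Z by eexists.
have [xl exl Wxl] : exists2 x, x *m Vu l = f (l + 1) & lifts_W x.
  by apply: lift_Vu_preimage; [|apply: fW]; lia.
have [xr exr Wxr] : exists2 x, x *m Vl r = f r & lifts_W x.
  by apply: lift_Vl_preimage; [|apply: fW]; lia.
pose f' := dfwith (dfwith f xl) xr.
have f'o i : i != l -> i != r + 1 -> f' i = f i.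
  by move=> il ir; rewrite /f' !dfwith_out // eq_sym.
have f'l : f' l = xl by rewrite /f' dfwith_out ?dfwith_in //; apply/eqP; lia.
have f'r : f' (r + 1) = xr by rewrite /f' dfwith_in.
exists f'; split.
- by move=> i iS; rewrite f'o ?fg //; apply/eqP; lia.
- move=> i iS; have [-> | il] := eqVneq i l.
    by rewrite f'l exl f'o //; apply/eqP; lia.
  by rewrite !f'o; [apply: fl | ..]; try apply/eqP; move/eqP: il; lia.
- move=> i iS; have [-> | ir] := eqVneq i r.
    by rewrite f'r exr f'o //; apply/eqP; lia.
  by rewrite !f'o; [apply: fr | ..]; try apply/eqP; move/eqP: ir; lia.
- move=> i iS; have [-> | il] := eqVneq i l; first by rewrite f'l.
  have [-> | ir] := eqVneq i (r + 1); first by rewrite f'r.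
  by rewrite f'o //; apply: fW; move/eqP: il; move/eqP: ir; lia.
Qed.

Lemma extends_agree d1 d2 f1 f2 i : extends d1 f1 -> extends d2 f2 ->
  (`|i| <= S + minn d1 d2)%N -> f1 i = f2 i.
Proof.
move=> [g1 l1 r1 _] [g2 l2 r2 _] le_i.
have [lt_iS | le_Si] := ltrP i (- S%:Z).
  suff agree m : (m <= minn d1 d2)%N -> forall j, - (S + m)%:Z <= j <= S%:Z -> f1 j = f2 j.
    by apply: (agree (minn d1 d2)); lia.
  elim: m => [|m IH] le_m j jm; first by rewrite g1 ?g2 //; lia.
  have [lt_j | le_j] := ltrP j (- (S + m)%:Z); last by apply: IH; lia.
  have [a a0 UL] := Vu_Vl_scalar j; apply: (scalar_mul_cancel a0 UL).
  have -> : f1 j *m Vu j = f1 (j + 1) by apply/esym/l1; lia.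
  have -> : f2 j *m Vu j = f2 (j + 1) by apply/esym/l2; lia.
  by apply: IH; lia.
suff agree m : (m <= minn d1 d2)%N -> forall j, - S%:Z <= j <= (S + m)%:Z -> f1 j = f2 j.
  by apply: (agree (minn d1 d2)); lia.
elim: m => [|m IH] le_m j jm; first by rewrite g1 ?g2 //; lia.
have [le_j | lt_j] := lerP j (S + m)%:Z; first by apply: IH; lia.
rewrite (_ : j = (S + m)%:Z + 1); last by lia.
have [b b0 LU] := Vl_Vu_scalar (S + m)%:Z; apply: (scalar_mul_cancel b0 LU).
have -> : f1 ((S + m)%:Z + 1) *m Vl (S + m)%:Z = f1 (S + m)%:Z by apply/esym/r1; lia.
have -> : f2 ((S + m)%:Z + 1) *m Vl (S + m)%:Z = f2 (S + m)%:Z by apply/esym/r2; lia.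
by apply: IH; lia.
Qed.

Lemma extends_glue : exists x : family, forall i, [/\ lifts_W (x i),
  exists r, x i *m Vu i = r *: x (i + 1) & exists r, x (i + 1) *m Vl i = r *: x i].
Proof.
have [x xP] := glue_families extends_exists
  (fun d1 d2 f1 f2 i e1 e2 le_i => extends_agree e1 e2 (leq_trans le_i (leq_addl _ _))).
exists x => i; have [f ef] := extends_exists (`|i| + 1).
rewrite (xP _ _ i ef) ?(xP _ _ (i + 1) ef); try lia.
have [fg fl fr fW] := ef.
suff /related_mulmx_scalar [] : f (i + 1) = f i *m Vu i \/ f i = f (i + 1) *m Vl i.
  by split => //; apply: fW; lia.
have [lt_iS | le_Si] := ltrP i (- S%:Z); first by left; apply: fl; lia.
have [lt_iS' | le_Si'] := ltrP i S%:Z; last by right; apply: fr; lia.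
apply: edge_lifted_related; apply: (eq_lifted_on _ lifted_g); last by lia.
by move=> j jS; rewrite fg.
Qed.

End Extension.

Lemma exists_lifted_chain (S : nat) : (forall i, n (i + 1) = n i) ->
  (forall i, i < - S%:Z -> row_free (vu i)) -> (forall i, S%:Z <= i -> row_free (vl i)) ->
  exists x : family, forall i, [/\ lifts_W (x i),
    exists r, x i *m Vu i = r *: x (i + 1) & exists r, x (i + 1) *m Vl i = r *: x i].
Proof.
move=> n_succ vu_free vl_free; have le_SS : - S%:Z <= S%:Z by lia.
have [g [W_g lifted_g]] := lifted_window le_SS.
exact: (extends_glue n_succ vu_free vl_free W_g lifted_g).
Qed.

End Lifting.

End ResidueMatrices.

Section Cosupport.
Variables (F : fieldType) (n : int -> nat).
Variables (vu : forall i : int, 'M[F]_(n i, n (i + 1)))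
          (vl : forall i : int, 'M[F]_(n (i + 1), n i)).

Lemma iter_fstep0 m (s : chain_state F n) :
  tagged s = 0 -> tagged (iter m (fstep vu) s) = 0.
Proof. by elim: m => //= m IH s0; rewrite /fstep /= IH // mul0mx. Qed.

Lemma iter_bstep0 m (s : chain_state F n) :
  tagged s = 0 -> tagged (iter m (bstep vl) s) = 0.
Proof.
elim: m => //= m IH s0; rewrite /bstep /= IH //.
by rewrite (_ : bcast 0 = 0) ?mul0mx //; apply/matrixP => a b; rewrite castmxE !mxE.
Qed.

Lemma comp_injective_vu_free i j : i < j -> comp_injective vu vl i j -> row_free (vu i).
Proof.
move=> lt_ij inj; apply: inj_row_free => x x_vu0.
have [// | x0] := eqVneq x 0; have := inj x x0; rewrite /comp_at (ltW lt_ij).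
have [m ->] : exists m, `|(j - i)%R|%N = m.+1 by exists `|(j - i)%R|.-1; lia.
by rewrite iterSr iter_fstep0 // eqxx.
Qed.

Lemma comp_injective_vl_free i j : j < i -> comp_injective vu vl i j -> row_free (vl (i - 1)).
Proof.
move=> lt_ji inj; apply: inj_row_free => v v_vl0.
pose y : 'rV_(n i) := castmx (erefl, congr1 n (subrK 1 i)) v.
have yv : bcast y = v by rewrite /bcast /y castmx_comp castmx_id.
have [y0 | y0] := eqVneq y 0.
  by rewrite -yv y0; apply/matrixP => a b; rewrite castmxE !mxE.
have := inj y y0; rewrite /comp_at leNgt lt_ji /=.
have [m ->] : exists m, `|(j - i)%R|%N = m.+1 by exists `|(j - i)%R|.-1; lia.
by rewrite iterSr iter_bstep0 ?eqxx //; change (bcast y *m vl (i - 1) = 0); rewrite yv.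
Qed.

Lemma finite_cosupport_row_free H : finite_cosupport vu vl H ->
  exists S : nat, (forall i, i < - S%:Z -> row_free (vu i)) /\
                  (forall i, S%:Z <= i -> row_free (vl i)).
Proof.
move=> cos; pose S := (\max_(h <- H) `|h|)%N.
have le_S j : j \in H -> (`|j| <= S)%N.
  by move=> jH; exact: (@leq_bigmax_seq _ H xpredT (fun h => `|h|%N) j jH isT).
exists S; split => i iS.
  have [j /le_S le_j inj] := cos i.
  by apply: (comp_injective_vu_free _ inj); lia.
have [j /le_S le_j inj] := cos (i + 1).
have lt_ji : j < i + 1 by lia.
by have := comp_injective_vl_free lt_ji inj; rewrite (_ : i + 1 - 1 = i) // addrK.
Qed.

End Cosupport.

Theorem lemma4p1 (R : idomainType) (k K : fieldType)
  (red : {rmorphism R -> k}) (iota : {rmorphism R -> K}) (n : int -> nat)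
  (Vu : forall i : int, 'M[R]_(n i, n (i + 1)))
  (Vl : forall i : int, 'M[R]_(n (i + 1), n i))
  (vu : forall i : int, 'M[k]_(n i, n (i + 1)))
  (vl : forall i : int, 'M[k]_(n (i + 1), n i))
  (H : seq int) (W : forall i : int, 'M[k]_(n i)) :
  is_DVR R -> residue_map red -> fraction_map iota ->
  smoothing red iota Vu Vl vu vl ->
  colinked vu vl -> finite_cosupport vu vl H ->
  subrep vu vl W -> pure_dim1 W -> exact_subrep vu vl W ->
  exists x : forall i : int, 'rV[R]_(n i),
    forall i : int,
      [/\ (map_mx red (x i) == W i)%MS,
          exists r : R, x i *m Vu i = r *: x (i + 1)
        & exists r : R, x (i + 1) *m Vl i = r *: x i].
Proof.
move=> dvr res_red [iota_inj _] [red_V gen] v_col cosup W_sub W_dim1 W_ex.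
have [pi [red_pi red_dvd]] := DVR_maximal_ideal dvr res_red.
have [red_surj red_eq0] := res_red.
have [S [vu_free vl_free]] := finite_cosupport_row_free cosup.
have scalar := general_rep_scalar iota_inj gen.
have n_succ := general_rep_dim gen.
exact: (exists_lifted_chain red_surj red_eq0 red_pi red_dvd
  (fun i => (red_V i).1) (fun i => (red_V i).2) (fun i => (scalar i).1) (fun i => (scalar i).2)
  v_col W_sub W_dim1 W_ex n_succ vu_free vl_free).
Qed.
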